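(* For $n\ge 0$ let $L_n$ be the lattice consisting of a bottom element $\perp$, a top element $\top$, and $n$ pairwise incomparable elements $a_1,\dots,a_n$ with $\perp<a_i<\top$ for all $i$ (so $L_0$ is the two-element chain and $L_1$ is the three-element chain). Then $|\mathrm{Tr}(L_n)|=2^{n+1}+n$. Furthermore, for $n\ge 1$, the lattice $\mathrm{Tr}(L_n)$ is the disjoint union of three subsets $B$, $M$, $T$, where $B\cong[1]^n$ and $T\cong[1]^n$ as subposets (Boolean lattices on $n$ atoms), $M$ has $n$ elements, and the covering relations of $\mathrm{Tr}(L_n)$ are exactly those internal to $B$, those internal to $T$, and the following: (i) there is a bijection between the $n$ elements of $B$ covered by $\max B$ and the elements of $M$, and each element of $M$ covers exactly its corresponding element of $B$; (ii) there is a bijection between the $n$ elements of $T$ covering $\min T$ and the elements of $M$, and each such element of $T$ covers exactly its corresponding element of $M$; (iii) $\min T$ covers $\max B$. Explicitly, $B$ consists of the transfer systems whose non-reflexive relations form a subset of $\{\perp\,R\,a_i\}$; $T$ consists of those containing all $\perp\,R\,a_i$, $\perp\,R\,\top$, and a subset of $\{a_i\,R\,\top\}$; $M$ consists of, for each $i$, the transfer system whose non-reflexive relations are $a_i\,R\,\top$ and $\perp\,R\,a_j$ for all $j\ne i$.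
   Context: For a finite lattice $(P,\le)$, a transfer system on $P$ is a partial order $R$ on $P$ refining $\le$ (i.e. $x\,R\,y\Rightarrow x\le y$) that is closed under restriction: if $x\,R\,z$ and $y\le z$ then $(x\wedge y)\,R\,y$. $\mathrm{Tr}(P)$ denotes the set of transfer systems on $P$, partially ordered by inclusion of relations ($R\le R'$ iff $x\,R\,y\Rightarrow x\,R'\,y$); it is a finite lattice. *)

From mathcomp Require Import all_boot.
Set Implicit Arguments. Unset Strict Implicit. Unset Printing Implicit Defensive.

(* A relation on P is a finite set of pairs; (x, y) \in R means x R y.     *)
Section Transfer.
Variables (P : finType) (le : rel P) (meet : P -> P -> P).

Definition is_transfer (R : {set P * P}) : bool :=
  [&& [forall x, (x, x) \in R],
      [forall x, forall y, ((x, y) \in R) && ((y, x) \in R) ==> (x == y)],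
      [forall x, forall y, forall z,
          ((x, y) \in R) && ((y, z) \in R) ==> ((x, z) \in R)],
      [forall x, forall y, ((x, y) \in R) ==> le x y]
    & [forall x, forall y, forall z,
          ((x, z) \in R) && le y z ==> ((meet x y, y) \in R)]].

Definition Tr : {set {set P * P}} := [set R | is_transfer R].

End Transfer.

Definition coverIn (T : finType) (S : {set {set T}}) (R R' : {set T}) : bool :=
  [&& R \in S, R' \in S, R \proper R' &
      [forall R'' in S, ~~ ((R \proper R'') && (R'' \proper R'))]].

(* None = bottom, Some None = top, Some (Some i) = a_i *)
Definition Ln (n : nat) : finType := option (option 'I_n).
Definition botL {n} : Ln n := None.
Definition topL {n} : Ln n := Some None.
Definition atL {n} (i : 'I_n) : Ln n := Some (Some i).

Definition leLn {n} (x y : Ln n) : bool :=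
  match x, y with
  | None, _ => true
  | _, Some None => true
  | Some (Some i), Some (Some j) => i == j
  | _, _ => false
  end.

Definition meetLn {n} (x y : Ln n) : Ln n :=
  if leLn x y then x else if leLn y x then y else botL.

Definition TrLn (n : nat) : {set {set Ln n * Ln n}} := Tr (@leLn n) (@meetLn n).

Definition isAtomL {n} (x : Ln n) : bool :=
  if x is Some (Some _) then true else false.

Definition Bset (n : nat) : {set {set Ln n * Ln n}} :=
  [set R in TrLn n |
     [forall p in R, (p.1 != p.2) ==> (p.1 == botL) && isAtomL p.2]].

Definition Tset (n : nat) : {set {set Ln n * Ln n}} :=
  [set R in TrLn n |
     [&& [forall i, (botL, atL i) \in R], (botL, topL) \in R &
         [forall p in R, (p.1 != p.2) ==>
             ((p.1 == botL) && (p.2 != botL)) || (isAtomL p.1 && (p.2 == topL))]]].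

Definition Mi (n : nat) (i : 'I_n) : {set Ln n * Ln n} :=
  [set p | [|| p.1 == p.2, p == (atL i, topL) |
               [exists j, (j != i) && (p == (botL, atL j))]]].

Definition Mset (n : nat) : {set {set Ln n * Ln n}} := [set Mi i | i : 'I_n].

From mathcomp Require Import all_boot.
Set Implicit Arguments. Unset Strict Implicit. Unset Printing Implicit Defensive.

(* A transfer system R on L_n is determined by the set S of atoms a_j with
   bot R a_j, whether bot R top (b), and the set U of atoms a_i with a_i R top.
   Restricting bot R top along a_j <= top forces S = everything when b holds;
   restricting a_i R top along a_j <= top gives a_i /\ a_j = bot R a_j for
   j <> i; transitivity through bot R a_i R top forces b when i is in S and U.
   The solutions are exactly the three families B (b false, U empty),
   M_i (U = {i}, S its complement) and T (b true, S everything), and inclusion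
   of transfer systems is componentwise inclusion of (S, b, U). Hence B and T
   are Boolean lattices, and a pair of comparable systems fails to be a cover
   exactly when a system of one of these shapes lies strictly between them. *)

Section TransferSystems.
Variables (P : finType) (le : rel P) (meet : P -> P -> P).

Lemma transferP (R : {set P * P}) :
  reflect
    [/\ forall x, (x, x) \in R,
        forall x y, (x, y) \in R -> (y, x) \in R -> x = y,
        forall x y z, (x, y) \in R -> (y, z) \in R -> (x, z) \in R,
        forall x y, (x, y) \in R -> le x y &
        forall x y z, (x, z) \in R -> le y z -> (meet x y, y) \in R]
    (is_transfer le meet R).
Proof.
apply: (iffP and5P) => -[refl anti trans sub restr]; split.
- exact/forallP.
- by move=> x y xy yx; apply/eqP; move/forallP/(_ x)/forallP/(_ y): anti; rewrite xy yx.
- move=> x y z xy yz.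
  by move/forallP/(_ x)/forallP/(_ y)/forallP/(_ z): trans; rewrite xy yz; apply.
- by move=> x y xy; move/forallP/(_ x)/forallP/(_ y): sub; rewrite xy.
- move=> x y z xz yz.
  by move/forallP/(_ x)/forallP/(_ y)/forallP/(_ z): restr; rewrite xz yz; apply.
- exact/forallP.
- by do 2![apply/forallP => ?]; apply/implyP => /andP[xy yx]; apply/eqP/anti.
- by do 3![apply/forallP => ?]; apply/implyP => /andP[]; apply: trans.
- by do 2![apply/forallP => ?]; apply/implyP; apply: sub.
- by do 3![apply/forallP => ?]; apply/implyP => /andP[]; apply: restr.
Qed.

End TransferSystems.

Section Covers.
Variable T : finType.
Implicit Types (S : {set {set T}}) (R X : {set T}).

Lemma coverInP S R R' :
  reflect [/\ R \in S, R' \in S, R \proper R' &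
             {in S, forall X, R \subset X -> X \subset R' -> X = R \/ X = R'}]
          (coverIn S R R').
Proof.
apply: (iffP and4P) => -[RS R'S RR' between]; split=> //.
- move=> X XS RX XR'; move/forall_inP/(_ X XS): between.
  rewrite !properEneq RX XR' !andbT negb_and !negbK.
  by case/orP => /eqP ->; [left | right].
- apply/forall_inP => X XS; apply/negP => /andP[RX XR'].
  have [E|E] := between X XS (proper_sub RX) (proper_sub XR'); subst X.
  + by rewrite properE subxx andbF in RX.
  + by rewrite properE subxx andbF in XR'.
Qed.

Lemma coverIn_sub S S' R R' :
  coverIn S' R R' -> S \subset S' -> R \in S -> R' \in S -> coverIn S R R'.
Proof.
move=> /coverInP[_ _ RR' between] /subsetP SS' RS R'S.
by apply/coverInP; split=> // X /SS'; apply: between.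
Qed.

Lemma coverIn_convex S S' R R' :
  S \subset S' -> coverIn S R R' ->
  {in S', forall X, R \subset X -> X \subset R' -> X \in S} -> coverIn S' R R'.
Proof.
move=> /subsetP SS' /coverInP[RS R'S RR' between] convex.
apply/coverInP; split; [exact: SS' | exact: SS' | by [] |].
by move=> X XS' RX XR'; apply: between; rewrite ?convex.
Qed.

Lemma coverIn_between S R R' X :
  coverIn S R R' -> X \in S -> R \subset X -> X \subset R' -> X = R \/ X = R'.
Proof. by case/coverInP => _ _ _; apply. Qed.

End Covers.

Lemma disjoint_imsets (aT bT T : finType) (f : aT -> T) (g : bT -> T) :
  (forall x y, f x != g y) -> [disjoint [set f x | x : aT] & [set g y | y : bT]].
Proof.
move=> fg; rewrite -setI_eq0; apply/eqP/setP => z; rewrite in_setI in_set0.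
by apply/negP => /andP[/imsetP[x _ ->] /imsetP[y _ /eqP]]; rewrite (negbTE (fg x y)).
Qed.

Section PowersetCovers.
Variable T : finType.
Implicit Types A X : {set T}.

Lemma set1_neq0 (i : T) : [set i] != set0.
Proof. by apply/set0Pn; exists i; rewrite inE. Qed.

Lemma coverIn_imset (T' : finType) (f : {set T} -> {set T'}) A A' :
  {mono f : X Y / X \subset Y} ->
  coverIn [set f X | X : {set T}] (f A) (f A') = coverIn [set: {set T}] A A'.
Proof.
move=> fmono; have f_inj : injective f.
  by move=> X Y E; apply/eqP; rewrite eqEsubset -!fmono E subxx.
have fproper X Y : (f X \proper f Y) = (X \proper Y) by rewrite !properE !fmono.
have fS X : f X \in [set f Y | Y : {set T}] by apply/imsetP; exists X.
apply/coverInP/coverInP => -[_ _ AA' between].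
  split; rewrite ?in_setT -?fproper // => X _ AX XA'; rewrite -!fmono in AX XA'.
  by case: (between _ (fS X) AX XA') => /f_inj ->; [left | right].
split; rewrite ?fS ?fproper // => _ /imsetP[X _ ->]; rewrite !fmono => AX XA'.
by case: (between X (in_setT X) AX XA') => ->; [left | right].
Qed.

Lemma coverIn_setT A : coverIn [set: {set T}] A setT = [exists i, A == ~: [set i]].
Proof.
apply/coverInP/existsP => [[_ _ /properP[_ [i _ iA]] between] | [i /eqP ->]].
  have AiC : A \subset ~: [set i] by rewrite subsetC sub1set inE.
  exists i; apply/eqP.
  case: (between _ (in_setT _) AiC (subsetT _)) => [-> // | /setP/(_ i)].
  by rewrite !inE eqxx.
split; rewrite ?inE //.
  by apply/properP; split; [exact: subsetT | exists i; rewrite ?inE ?eqxx].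
move=> X _ iCX _; case: (boolP (i \in X)) => iX; [right | left].
  apply/setP => j; rewrite inE; case: (eqVneq j i) => [-> // | ji].
  by apply: (subsetP iCX); rewrite !inE.
by apply/eqP; rewrite eqEsubset iCX andbT subsetC sub1set inE.
Qed.

Lemma coverIn_set0 A : coverIn [set: {set T}] set0 A = [exists i, A == [set i]].
Proof.
apply/coverInP/existsP => [[_ _ /properP[_ [i iA _]] between] | [i /eqP ->]].
  have iA' : [set i] \subset A by rewrite sub1set.
  exists i; apply/eqP.
  case: (between _ (in_setT _) (sub0set _) iA') => [/setP/(_ i) | -> //].
  by rewrite !inE eqxx.
split; rewrite ?inE //; first by rewrite proper0 set1_neq0.
by move=> X _ _; rewrite subset1 => /orP[] /eqP ->; [right | left].
Qed.

End PowersetCovers.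

Section TransferSystemsOnLn.
Variable n : nat.
Implicit Types (S U A : {set 'I_n}) (b : bool) (R X : {set Ln n * Ln n}).

Definition arrowL S b U (x y : Ln n) : bool :=
  match x, y with
  | None, Some (Some j) => j \in S
  | None, Some None => b
  | Some (Some i), Some None => i \in U
  | _, _ => false
  end.

Definition relL S b U : {set Ln n * Ln n} :=
  [set p | (p.1 == p.2) || arrowL S b U p.1 p.2].

Definition admissible S b U : bool :=
  [&& b ==> (S == setT),
      [forall i in U, ~: [set i] \subset S] &
      [forall i in U, (i \in S) ==> b]].

Definition atoms_from_bot R := [set j | (botL, atL j) \in R].
Definition atoms_to_top R := [set i | (atL i, topL) \in R].

Lemma in_relL S b U x y :
  ((x, y) \in relL S b U) = (x == y) || arrowL S b U x y.
Proof. by rewrite inE. Qed.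

Lemma relL_sub S b U S' b' U' :
  (relL S b U \subset relL S' b' U') = [&& S \subset S', b ==> b' & U \subset U'].
Proof.
apply/subsetP/and3P => [sub | [SS' bb' UU']].
- split.
  + by apply/subsetP => i iS; have := sub (botL, atL i); rewrite !in_relL /= iS; apply.
  + by apply/implyP => bT; have := sub (botL, topL); rewrite !in_relL /= bT; apply.
  + by apply/subsetP => i iU; have := sub (atL i, topL); rewrite !in_relL /= iU; apply.
- move=> [x y]; rewrite !in_relL; case: eqP => //= _.
  case: x => [[i|]|]; case: y => [[j|]|] //=.
  + exact: (subsetP UU').
  + exact: (subsetP SS').
  + exact: (implyP bb').
Qed.

Lemma relL_inj S b U S' b' U' :
  relL S b U = relL S' b' U' -> [/\ S = S', b = b' & U = U'].
Proof.
move=> E.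
have /and3P[SS' bb' UU'] : [&& S \subset S', b ==> b' & U \subset U'] by rewrite -relL_sub E.
have /and3P[S'S b'b U'U] : [&& S' \subset S, b' ==> b & U' \subset U] by rewrite -relL_sub E.
split; [by apply/eqP; rewrite eqEsubset SS' | | by apply/eqP; rewrite eqEsubset UU'].
by case: b b' {E} bb' b'b => -[].
Qed.

Lemma meetL_atoms (i j : 'I_n) : i != j -> meetLn (atL i) (atL j) = botL.
Proof. by move=> ij; rewrite /meetLn /= (negbTE ij) eq_sym (negbTE ij). Qed.

Lemma relL_tr_admissible S b U : relL S b U \in TrLn n -> admissible S b U.
Proof.
rewrite inE => /transferP[_ _ trans _ restr]; apply/and3P; split.
- apply/implyP => bT; apply/eqP/setP => j; rewrite inE.
  by have := restr botL (atL j) topL; rewrite !in_relL /=; apply.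
- apply/forall_inP => i iU; apply/subsetP => j; rewrite !inE => ji.
  have := restr (atL i) (atL j) topL; rewrite meetL_atoms 1?eq_sym //.
  by rewrite !in_relL /= iU; apply.
- apply/forall_inP => i iU; apply/implyP => iS.
  by have := trans botL (atL i) topL; rewrite !in_relL /= iS iU; apply.
Qed.

Lemma admissible_relL_tr S b U : admissible S b U -> relL S b U \in TrLn n.
Proof.
case/and3P => bS US USb; rewrite inE; apply/transferP; split.
- by move=> x; rewrite in_relL eqxx.
- move=> x y; rewrite !in_relL; case: (eqVneq x y) => //= _.
  by case: x => [[i|]|]; case: y => [[j|]|].
- move=> x y z; rewrite !in_relL.
  case: (eqVneq x y) => [-> _ yz //|_ /= xy].
  case: (eqVneq y z) => [<- _|_ /= yz]; first by rewrite xy orbT.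
  case: (eqVneq x z) => //= _; move: xy yz.
  case: x => [[i|]|]; case: y => [[j|]|]; case: z => [[k|]|] //= jS jU.
  exact: (implyP (forall_inP USb j jU)).
- move=> x y; rewrite in_relL; case: (eqVneq x y) => [->|_ /=].
    by case: y => [[j|]|] /=.
  by case: x => [[i|]|]; case: y => [[j|]|].
- move=> x y z; rewrite !in_relL.
  case: x => [[i|]|]; case: y => [[j|]|]; case: z => [[k|]|] //=;
    rewrite /meetLn /= ?eqxx //=.
  + by rewrite orbF => /eqP[->] /eqP ->; rewrite !eqxx.
  + move=> iU _; case: (eqVneq i j) => [->|ij /=]; first by rewrite !eqxx.
    by apply: (subsetP (forall_inP US i iU)); rewrite !inE eq_sym.
  + by move=> kS /eqP ->.
  + by move=> /(implyP bS)/eqP ->; rewrite inE.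
Qed.

Lemma tr_relL R : R \in TrLn n ->
  R = relL (atoms_from_bot R) ((botL, topL) \in R) (atoms_to_top R).
Proof.
rewrite inE => /transferP[refl _ _ sub _]; apply/setP => -[x y].
rewrite in_relL; case: (eqVneq x y) => [<-|xy] /=; first exact: refl.
case: x xy => [[i|]|]; case: y => [[j|]|] //= xy; rewrite ?inE //.
all: apply/negP => /sub //= /eqP ij.
by rewrite ij eqxx in xy.
Qed.

Variant admissible_spec : {set 'I_n} -> bool -> {set 'I_n} -> Prop :=
  | AdmissibleB A : admissible_spec A false set0
  | AdmissibleM i : admissible_spec (~: [set i]) false [set i]
  | AdmissibleT U : admissible_spec setT true U.

Lemma admissibleP S b U : admissible S b U -> admissible_spec S b U.
Proof.
case/and3P => /implyP bS /forall_inP US /forall_inP USb.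
case: b bS USb => [/(_ isT)/eqP -> _ | _ USb]; first exact: AdmissibleT.
have [-> | [i iU]] := set_0Vmem U; first exact: AdmissibleB.
have iS : i \notin S by apply/negP => /(implyP (USb i iU)).
have SE : S = ~: [set i].
  apply/eqP; rewrite eqEsubset US // andbT; apply/subsetP => j jS.
  by rewrite !inE; apply: contraNneq iS => <-.
have UE : U = [set i].
  apply/setP => j; rewrite inE; apply/idP/eqP => [jU | -> //].
  apply/eqP/negPn/negP => ji; move/negP: iS; apply.
  by apply: (subsetP (US j jU)); rewrite !inE eq_sym.
by rewrite SE UE; exact: AdmissibleM.
Qed.

Local Notation bsys A := (relL A false set0).
Local Notation msys i := (relL (~: [set i]) false [set i]).
Local Notation tsys U := (relL setT true U).

Variant tr_spec : {set Ln n * Ln n} -> Prop :=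
  | TrB A : tr_spec (bsys A)
  | TrM i : tr_spec (msys i)
  | TrT U : tr_spec (tsys U).

Lemma trP R : R \in TrLn n -> tr_spec R.
Proof.
move=> RT; have := RT; rewrite (tr_relL RT) => /relL_tr_admissible.
by case/admissibleP; constructor.
Qed.

Lemma bsys_tr A : bsys A \in TrLn n.
Proof.
apply: admissible_relL_tr; apply/and3P.
by split=> //; apply/forall_inP => i; rewrite inE.
Qed.

Lemma msys_tr i : msys i \in TrLn n.
Proof.
apply: admissible_relL_tr; apply/and3P.
by split=> //; apply/forall_inP => j; rewrite inE => /eqP ->; rewrite ?subxx ?inE ?eqxx.
Qed.

Lemma tsys_tr U : tsys U \in TrLn n.
Proof.
apply: admissible_relL_tr; apply/and3P.
by split; rewrite ?eqxx //; apply/forall_inP => i; rewrite ?subsetT ?inE.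
Qed.

Lemma atoms_to_top_relL S b U : atoms_to_top (relL S b U) = U.
Proof. by apply/setP => i; rewrite inE in_relL. Qed.

Lemma Mi_msys i : Mi i = msys i.
Proof.
apply/setP => -[x y]; rewrite in_relL !inE /=; case: (eqVneq x y) => //= xy.
case: x xy => [[k|]|]; case: y => [[j|]|] //= _; rewrite ?inE.
all: try by apply/negbTE/norP;
  split; [apply/eqP => -[] | apply/existsP => -[j0 /andP[_ /eqP[]]]].
all: try by apply/existsP => -[j0 /andP[_ /eqP[]]].
- apply/orP/eqP => [[/eqP[->] // | /existsP[j0 /andP[_ /eqP[] //]]] | ->].
  by left.
- apply/existsP/idP => [[j0 /andP[j0i /eqP[->]]] // | ji].
  by exists j; rewrite ji eqxx.
Qed.

Lemma bsys_inj : injective (fun A => bsys A).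
Proof. by move=> A A' /relL_inj[]. Qed.

Lemma tsys_inj : injective (fun U => tsys U).
Proof. by move=> U U' /relL_inj[]. Qed.

Lemma msys_inj : injective (fun i => msys i).
Proof. by move=> i j /relL_inj[_ _ /set1_inj]. Qed.

Lemma BsetE : Bset n = [set bsys A | A : {set 'I_n}].
Proof.
apply/setP => R; rewrite inE; apply/andP/imsetP => [[/trP RT] | [A _ ->]].
  case: R / RT => [A | i | U] nonrefl; first by exists A.
    by have := forall_inP nonrefl (atL i, topL); rewrite in_relL /= !inE eqxx => /(_ isT).
  by have := forall_inP nonrefl (botL, topL); rewrite in_relL => /(_ isT).
split; first exact: bsys_tr.
apply/forall_inP => -[x y]; rewrite in_relL /=; case: (eqVneq x y) => //= _.
by case: x => [[i|]|]; case: y => [[j|]|] //=; rewrite inE.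
Qed.

Lemma TsetE : Tset n = [set tsys U | U : {set 'I_n}].
Proof.
apply/setP => R; rewrite inE; apply/andP/imsetP => [[/trP RT] | [U _ ->]].
  by case: R / RT => [A | i | U] /and3P[_ + _]; rewrite in_relL // => _; exists U.
split; first exact: tsys_tr.
apply/and3P; split; first by apply/forallP => i; rewrite in_relL /= inE.
  by rewrite in_relL.
apply/forall_inP => -[x y]; rewrite in_relL /=; case: (eqVneq x y) => //= _.
by case: x => [[i|]|]; case: y => [[j|]|] //=; rewrite inE.
Qed.

Lemma MsetE : Mset n = [set msys i | i : 'I_n].
Proof. exact: eq_imset Mi_msys. Qed.

Lemma TrLnE : TrLn n = Bset n :|: Mset n :|: Tset n.
Proof.
rewrite BsetE MsetE TsetE; apply/setP => R; rewrite !in_setU.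
apply/idP/idP => [/trP[A | i | U] | /orP[/orP[] | ] /imsetP[? _ ->]].
- by rewrite (imset_f (fun A => bsys A)).
- by rewrite (imset_f (fun i => msys i)) ?orbT.
- by rewrite (imset_f (fun U => tsys U)) ?orbT.
- exact: bsys_tr.
- exact: msys_tr.
- exact: tsys_tr.
Qed.

Lemma disjoint_BM : [disjoint Bset n & Mset n].
Proof.
rewrite BsetE MsetE; apply: disjoint_imsets => A i; apply/eqP.
by case/relL_inj => _ _ /esym/eqP; rewrite (negbTE (set1_neq0 i)).
Qed.

Lemma disjoint_BT : [disjoint Bset n & Tset n].
Proof. by rewrite BsetE TsetE; apply: disjoint_imsets => A U; apply/eqP => /relL_inj[]. Qed.

Lemma disjoint_MT : [disjoint Mset n & Tset n].
Proof. by rewrite MsetE TsetE; apply: disjoint_imsets => i U; apply/eqP => /relL_inj[]. Qed.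

Lemma card_subsets : #|{set 'I_n}| = 2 ^ n.
Proof. by rewrite -cardsT -powersetT card_powerset cardsT card_ord. Qed.

Lemma card_Mset : #|Mset n| = n.
Proof. by rewrite MsetE card_imset ?card_ord //; exact: msys_inj. Qed.

Lemma card_TrLn : #|TrLn n| = 2 ^ n.+1 + n.
Proof.
rewrite TrLnE !cardsU setIUl !disjoint_setI0 ?disjoint_BM ?disjoint_BT ?disjoint_MT //.
rewrite setU0 !cards0 !subn0 card_Mset BsetE TsetE.
by rewrite (card_imset _ bsys_inj) (card_imset _ tsys_inj) card_subsets expnS mul2n -addnn addnAC.
Qed.

Definition sigma R := bsys (~: atoms_to_top R).
Definition tau R := tsys (atoms_to_top R).

Lemma sigma_msys i : sigma (msys i) = bsys (~: [set i]).
Proof. by rewrite /sigma atoms_to_top_relL. Qed.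

Lemma tau_msys i : tau (msys i) = tsys [set i].
Proof. by rewrite /tau atoms_to_top_relL. Qed.

Lemma sigma_inj : {in Mset n &, injective sigma}.
Proof.
rewrite MsetE => _ _ /imsetP[i _ ->] /imsetP[j _ ->].
by rewrite !sigma_msys => /bsys_inj/setC_inj/set1_inj ->.
Qed.

Lemma tau_inj : {in Mset n &, injective tau}.
Proof.
rewrite MsetE => _ _ /imsetP[i _ ->] /imsetP[j _ ->].
by rewrite !tau_msys => /tsys_inj/set1_inj ->.
Qed.

Lemma proper_relL S b U S' b' U' :
  (relL S b U \proper relL S' b' U') =
  [&& S \subset S', b ==> b' & U \subset U'] &&
  ~~ [&& S' \subset S, b' ==> b & U' \subset U].
Proof. by rewrite properE !relL_sub. Qed.

Lemma cover_sigma i : coverIn (TrLn n) (bsys (~: [set i])) (msys i).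
Proof.
apply/coverInP; split; [exact: bsys_tr | exact: msys_tr | |].
  by rewrite proper_relL subxx sub0set subset0 (negbTE (set1_neq0 i)).
move=> _ /trP[A | j | U]; rewrite !relL_sub ?andbF //=.
  by rewrite !sub0set !andbT => iA Ai; left; congr relL; apply/eqP; rewrite eqEsubset Ai.
by rewrite sub1set inE => _ /andP[_ /eqP ->]; right.
Qed.

Lemma cover_tau i : coverIn (TrLn n) (msys i) (tsys [set i]).
Proof.
apply/coverInP; split; [exact: msys_tr | exact: tsys_tr | |].
  by rewrite proper_relL !subsetT subxx /= andbF.
move=> _ /trP[A | j | U]; rewrite !relL_sub ?andbF //=.
- by rewrite subset0 (negbTE (set1_neq0 i)) andbF.
- by rewrite sub1set inE => /andP[_ /eqP ->]; left.
by move=> /andP[_ iU] /andP[_ Ui]; right; congr relL; apply/eqP; rewrite eqEsubset Ui.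
Qed.

Lemma cover_max_bsys_min_tsys : coverIn (TrLn n) (bsys setT) (tsys set0).
Proof.
apply/coverInP; split; [exact: bsys_tr | exact: tsys_tr | |].
  by rewrite proper_relL !subxx.
move=> _ /trP[A | j | U]; rewrite !relL_sub ?andbF //=.
- by move=> /andP[TA _] _; left; congr relL; apply/eqP; rewrite eqEsubset TA subsetT.
- by rewrite subset0 (negbTE (set1_neq0 j)) andbF.
by move=> _ /andP[_]; rewrite subset0 => /eqP ->; right.
Qed.


Lemma bsys_sub : {mono (fun A => bsys A) : A A' / A \subset A'}.
Proof. by move=> A A'; rewrite relL_sub sub0set /= andbT. Qed.

Lemma tsys_sub : {mono (fun U => tsys U) : U U' / U \subset U'}.
Proof. by move=> U U'; rewrite relL_sub subxx. Qed.

Lemma bsys_Bset A : bsys A \in Bset n.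
Proof. by rewrite BsetE (imset_f (fun A => bsys A)). Qed.

Lemma msys_Mset i : msys i \in Mset n.
Proof. by rewrite MsetE (imset_f (fun i => msys i)). Qed.

Lemma tsys_Tset U : tsys U \in Tset n.
Proof. by rewrite TsetE (imset_f (fun U => tsys U)). Qed.

Lemma Bset_sub_TrLn : Bset n \subset TrLn n.
Proof. by apply/subsetP => R; rewrite BsetE => /imsetP[A _ ->]; exact: bsys_tr. Qed.

Lemma Tset_sub_TrLn : Tset n \subset TrLn n.
Proof. by apply/subsetP => R; rewrite TsetE => /imsetP[U _ ->]; exact: tsys_tr. Qed.

Lemma Bset_down R R' : R \in TrLn n -> R \subset R' -> R' \in Bset n -> R \in Bset n.
Proof.
move=> RT /subsetP RR' /setIdP[_ /forall_inP nonrefl].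
by apply/setIdP; split=> //; apply/forall_inP => p /RR'; exact: nonrefl.
Qed.

Lemma Tset_up R R' : R \in Tset n -> R' \in TrLn n -> R \subset R' -> R' \in Tset n.
Proof.
rewrite TsetE => /imsetP[U _ ->] /trP[A | i | U']; rewrite relL_sub ?andbF // => _.
exact: (imset_f (fun U => tsys U)).
Qed.

Lemma sigma_image : sigma @: Mset n = [set R | coverIn (Bset n) R (bsys setT)].
Proof.
apply/setP => R; rewrite inE BsetE MsetE.
apply/imsetP/idP => [[_ /imsetP[i _ ->] ->] | cov].
  by rewrite sigma_msys (coverIn_imset _ _ bsys_sub) coverIn_setT; apply/existsP; exists i.
have /imsetP[A _ RA] : R \in [set bsys A | A : {set 'I_n}] by case/coverInP: cov.
move: cov; rewrite RA (coverIn_imset _ _ bsys_sub) coverIn_setT => /existsP[i /eqP ->].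
by exists (msys i); rewrite ?sigma_msys // (imset_f (fun i => msys i)).
Qed.

Lemma tau_image : tau @: Mset n = [set R | coverIn (Tset n) (tsys set0) R].
Proof.
apply/setP => R; rewrite inE TsetE MsetE.
apply/imsetP/idP => [[_ /imsetP[i _ ->] ->] | cov].
  by rewrite tau_msys (coverIn_imset _ _ tsys_sub) coverIn_set0; apply/existsP; exists i.
have /imsetP[U _ RU] : R \in [set tsys U | U : {set 'I_n}] by case/coverInP: cov.
move: cov; rewrite RU (coverIn_imset _ _ tsys_sub) coverIn_set0 => /existsP[i /eqP ->].
by exists (msys i); rewrite ?tau_msys // (imset_f (fun i => msys i)).
Qed.

Lemma coverIn_TrLn_of R R' :
  coverIn (Bset n) R R' \/ coverIn (Tset n) R R' \/
  (R' \in Mset n /\ R = sigma R') \/ (R \in Mset n /\ R' = tau R) \/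
  (R = bsys setT /\ R' = tsys set0) ->
  coverIn (TrLn n) R R'.
Proof.
case=> [cov | [cov | [[] | [[] | [-> ->]]]]].
- apply: (coverIn_convex Bset_sub_TrLn cov) => X XT _ XR'.
  by case/coverInP: cov => _ R'B _ _; exact: Bset_down XT XR' R'B.
- apply: (coverIn_convex Tset_sub_TrLn cov) => X XT RX _.
  by case/coverInP: cov => RB _ _ _; exact: Tset_up RB XT RX.
- by rewrite MsetE => /imsetP[i _ ->] ->; rewrite sigma_msys; exact: cover_sigma.
- by rewrite MsetE => /imsetP[i _ ->] ->; rewrite tau_msys; exact: cover_tau.
- exact: cover_max_bsys_min_tsys.
Qed.

Lemma coverIn_TrLn R R' :
  coverIn (TrLn n) R R' ->
  coverIn (Bset n) R R' \/ coverIn (Tset n) R R' \/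
  (R' \in Mset n /\ R = sigma R') \/ (R \in Mset n /\ R' = tau R) \/
  (R = bsys setT /\ R' = tsys set0).
Proof.
move=> cov; case/coverInP: (cov) => /trP RT /trP R'T + _.
move: cov; case: R / RT => [A | i | U]; case: R' / R'T => [A' | j | U'] cov;
  rewrite proper_relL => /andP[/and3P[SS' bb' UU'] notR'R] //.
- by left; apply: (coverIn_sub cov); rewrite ?Bset_sub_TrLn ?bsys_Bset.
- right; right; left; split; first exact: msys_Mset.
  have AjC : bsys A \subset bsys (~: [set j]) by rewrite relL_sub SS' sub0set.
  have jCj : bsys (~: [set j]) \subset msys j by rewrite relL_sub subxx sub0set.
  rewrite sigma_msys; case: (coverIn_between cov (bsys_tr _) AjC jCj) => [-> // | /relL_inj[_ _]].
  by move/esym/eqP; rewrite (negbTE (set1_neq0 j)).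
- right; right; right; right.
  have AT : bsys A \subset bsys setT by rewrite relL_sub subsetT sub0set.
  have TU' : bsys setT \subset tsys U' by rewrite relL_sub subxx sub0set.
  case: (coverIn_between cov (bsys_tr _) AT TU') => [EA | /relL_inj[] //].
  rewrite -EA in cov *; split=> //.
  have T0 : bsys setT \subset tsys set0 by rewrite relL_sub !subxx.
  have U'0 : tsys set0 \subset tsys U' by rewrite relL_sub subxx sub0set.
  by case: (coverIn_between cov (tsys_tr _) T0 U'0) => [/relL_inj[] // | ->].
- by rewrite subset0 (negbTE (set1_neq0 i)) in UU'.
- by move: UU' notR'R; rewrite sub1set inE => /eqP ->; rewrite !subxx.
- right; right; right; left; split; first exact: msys_Mset.
  have iI : msys i \subset tsys [set i] by rewrite relL_sub subsetT subxx.
  have IU' : tsys [set i] \subset tsys U' by rewrite relL_sub subxx UU'.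
  by rewrite tau_msys; case: (coverIn_between cov (tsys_tr _) iI IU') => [/relL_inj[] | <-].
- by right; left; apply: (coverIn_sub cov); rewrite ?Tset_sub_TrLn ?tsys_Tset.
Qed.

End TransferSystemsOnLn.

Theorem proposition5p2 :
  (forall n : nat, #|TrLn n| = 2 ^ n.+1 + n) /\
  (forall n : nat, 0 < n ->
     TrLn n = Bset n :|: Mset n :|: Tset n /\
     [disjoint Bset n & Mset n] /\ [disjoint Bset n & Tset n] /\
     [disjoint Mset n & Tset n] /\
     #|Mset n| = n /\
     exists (f g : {set 'I_n} -> {set Ln n * Ln n})
            (sigma tau : {set Ln n * Ln n} -> {set Ln n * Ln n}),
       injective f /\ [set f A | A : {set 'I_n}] = Bset n /\
       (forall A A', (f A \subset f A') = (A \subset A')) /\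
       injective g /\ [set g A | A : {set 'I_n}] = Tset n /\
       (forall A A', (g A \subset g A') = (A \subset A')) /\
       {in Mset n &, injective sigma} /\
       sigma @: Mset n = [set R | coverIn (Bset n) R (f setT)] /\
       {in Mset n &, injective tau} /\
       tau @: Mset n = [set R | coverIn (Tset n) (g set0) R] /\
       (forall R R' : {set Ln n * Ln n},
          coverIn (TrLn n) R R' <->
          (coverIn (Bset n) R R' \/
           coverIn (Tset n) R R' \/
           (R' \in Mset n /\ R = sigma R') \/
           (R \in Mset n /\ R' = tau R) \/
           (R = f setT /\ R' = g set0)))).
Proof.
split=> [n | n _]; first exact: card_TrLn.
do ![apply: conj];
  [exact: TrLnE | exact: disjoint_BM | exact: disjoint_BT | exact: disjoint_MT |
   exact: card_Mset |].
exists (fun A => relL A false set0), (fun U => relL setT true U), (@sigma n), (@tau n).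
do ![apply: conj];
  [exact: bsys_inj | by rewrite BsetE | exact: bsys_sub |
   exact: tsys_inj | by rewrite TsetE | exact: tsys_sub |
   exact: sigma_inj | exact: sigma_image | exact: tau_inj | exact: tau_image |].
by move=> R R'; split; [exact: coverIn_TrLn | exact: coverIn_TrLn_of].
Qed.
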